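(* Fix a constant $h>0$. Consider a round $r$ in which every agent has a non-null adoption, i.e. $Z_0(r-1)=0$, so that $M=Nh\log N$ tokens are disseminated, of which $M_k=Z_k(r-1)\,h\log N$ carry arm $a_k$. Suppose the final positions of the tokens are independent and each token ends at each given agent $i$ with probability in $\left[\frac1N-\frac1{N^3},\frac1N+\frac1{N^3}\right]$, and agent $i$ sets $a_i(r)$ to the value of a uniformly random token among those ending at $i$ (and $a_i(r)=0$ if none). Then there is a sequence $\epsilon_N\to0$ (depending only on $N$ and $h$) such that for every agent $i$, every $k\in\{1,\dots,K\}$ and every such adoption profile $\mathcal X(r-1)$, $$\bigl|\mathbb P(a_i(r)=a_k\mid \mathcal X(r-1))-Q_k(r-1)\bigr|\le \epsilon_N\,Q_k(r-1);$$ in particular $\lim_{N\to\infty}\mathbb P(a_i(r)=a_k\mid\mathcal X(r-1))=Q_k(r-1)$.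
   Context: $N$ agents, $K$ arms. Each agent $i$ has adoption $\omega_i(r)\in\{0,1,\dots,K\}$ after round $r$ ($0$ means no preference). $Z_k(r)=|\{i:\omega_i(r)=k\}|$, $Q_k(r)=Z_k(r)/N$, and $\mathcal X(r)$ denotes the full adoption profile $(\omega_1(r),\dots,\omega_N(r))$. In the disseminating stage of round $r$, every agent with non-null adoption emits $h\log N$ tokens each carrying its current adoption. *)

From HB Require Import structures.
From mathcomp Require Import all_boot all_order all_algebra.
From mathcomp Require Import all_classical all_reals all_analysis.
Set Implicit Arguments. Unset Strict Implicit. Unset Printing Implicit Defensive.
Import Order.TTheory GRing.Theory Num.Theory.
Local Open Scope ring_scope.

(* Tokens of the disseminating stage: agent i' emits T tokens, token (i', t)
   carries the adoption omega i' of its emitter.  Arms a_1..a_K are encoded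
   as 'I_K (arm a_{k+1} <-> k : 'I_K); since every agent has a non-null
   adoption (Z_0(r-1) = 0), the profile is a map omega : 'I_N -> 'I_K. *)
Definition token (N T : nat) := ('I_N * 'I_T)%type.

Definition placement_prob (R : realType) (N T : nat)
  (p : token N T -> 'I_N -> R) (f : {ffun token N T -> 'I_N}) : R :=
  \prod_(j : token N T) p j (f j).

Definition pick_prob (R : realType) (N K T : nat) (omega : 'I_N -> 'I_K)
  (f : {ffun token N T -> 'I_N}) (i : 'I_N) (k : 'I_K) : R :=
  let n_i := #|[set j : token N T | f j == i]| in
  let n_ik := #|[set j : token N T | (f j == i) && (omega j.1 == k)]| in
  if n_i == 0%N then 0 else n_ik%:R / n_i%:R.

Definition adopt_prob (R : realType) (N K T : nat) (omega : 'I_N -> 'I_K)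
  (p : token N T -> 'I_N -> R) (i : 'I_N) (k : 'I_K) : R :=
  \sum_(f : {ffun token N T -> 'I_N})
     placement_prob p f * pick_prob R omega f i k.

Definition Qfrac (R : realType) (N K : nat) (omega : 'I_N -> 'I_K) (k : 'I_K) : R :=
  #|[set i' : 'I_N | omega i' == k]|%:R / N%:R.

From HB Require Import structures.
From mathcomp Require Import all_boot all_order all_algebra.
From mathcomp Require Import all_classical all_reals all_analysis.
From mathcomp Require Import lra perm.

Set Implicit Arguments.
Unset Strict Implicit.
Unset Printing Implicit Defensive.
Import Order.TTheory GRing.Theory Num.Theory.
Local Open Scope ring_scope.

(* Write [G j] for the probability that agent [i] picks token [j]. Exchanging
   the final positions of two tokens [j], [j'] is a bijection on placements that
   turns "i picks j" into "i picks j'" and changes the probability of a placement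
   by a factor at most [(hi/lo)^2 = 1 + O(1/N^2)], where [[lo, hi]] bounds the
   placement probabilities; so all the [G j] agree up to that factor. Their sum
   is the probability that some token reaches [i], which is at least
   [1 - (1 - lo)^(N T) >= 1 - O(1/(h log N))]. Hence each [G j] is [1/(N T)] up
   to a relative error [eps N], and summing over the [Z_k T] tokens carrying
   arm [k] gives [Q_k] up to the same relative error. *)

Lemma natr_card_set (R : numDomainType) (U : finType) (P : pred U) :
  (#|[set x | P x]|%:R : R) = \sum_x (P x)%:R.
Proof.
rewrite -sum1_card natr_sum big_mkcond /=; apply: eq_bigr => x _.
by rewrite inE; case: (P x).
Qed.

Lemma bigD1_2 (R : Type) (idx : R) (op : Monoid.com_law idx) (U : finType)
    (F : U -> R) (j j' : U) :
  j != j' -> \big[op/idx]_x F x = op (op (F j) (F j'))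
                                   (\big[op/idx]_(x | (x != j) && (x != j')) F x).
Proof.
move=> neq_jj'; rewrite (bigD1 j) //= (bigD1 j') /=; last by rewrite eq_sym.
by rewrite Monoid.mulmA.
Qed.

Lemma expr1B_mul1D_le1 (R : realDomainType) (x : R) (n : nat) : 0 <= x <= 1 ->
  (1 - x) ^+ n * (1 + n%:R * x) <= 1.
Proof.
move=> /andP[x_ge0 x_le1]; elim: n => [|n IH]; first by rewrite mul0r addr0 mulr1.
rewrite exprSr -mulrA; apply: le_trans IH; apply: ler_wpM2l.
  by apply: exprn_ge0; lra.
have := mulr_ge0 (mulr_ge0 x_ge0 x_ge0) (ler0n R n); rewrite -natr1; nra.
Qed.

Lemma prod1B_mul1D_le1 (R : realDomainType) (U : finType) (q : U -> R) (lo : R) :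
  0 <= lo <= 1 -> (forall j, lo <= q j <= 1) ->
  \prod_j (1 - q j) * (1 + #|U|%:R * lo) <= 1.
Proof.
move=> lo_01 q_bnd; apply: le_trans (expr1B_mul1D_le1 #|U| lo_01).
apply: ler_wpM2r; first by case/andP: lo_01 => ? ?; apply: addr_ge0 => //; apply: mulr_ge0.
rewrite -prodr_const; apply: ler_prod => j _.
by case/andP: (q_bnd j) => ? ?; apply/andP; split; lra.
Qed.

Lemma inv_cube_boundsE (R : realFieldType) (n y : R) :
  (n^-1 - (n ^+ 3)^-1 <= y <= n^-1 + (n ^+ 3)^-1) =
  (n^-1 * (1 - n^-1 ^+ 2) <= y <= n^-1 * (1 + n^-1 ^+ 2)).
Proof. by rewrite -exprVn (exprS _ 2) mulrBr mulrDr mulr1. Qed.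

Lemma invn_sqr_bounds (R : realFieldType) (N : nat) : (1 < N)%N ->
  0 < (N%:R : R)^-1 <= 1 / 2 /\ 0 < (N%:R : R)^-1 ^+ 2 <= 1 / 4.
Proof.
rewrite -(ler_nat R) => N_ge2; have u_gt0 : (0 : R) < N%:R^-1 by rewrite invr_gt0; lra.
have u_le : (N%:R^-1 : R) <= 1 / 2 by rewrite -[_^-1]mul1r ler_pdivrMr; lra.
by rewrite u_gt0 u_le exprn_gt0 //= expr2; split=> //; nra.
Qed.

Section TokenPicking.
Variables (R : realType) (N T : nat) (p : token N T -> 'I_N -> R) (i : 'I_N).
Local Notation tok := (token N T).
Local Notation placement := {ffun tok -> 'I_N}.

Definition arrivals (f : placement) : nat := #|[set j : tok | f j == i]|.

(* Zero when nothing arrives at [i], since [x / 0 = 0]. *)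
Definition pick_weight (f : placement) (j : tok) : R :=
  (f j == i)%:R / (arrivals f)%:R.

Definition pick_chance (j : tok) : R :=
  \sum_f placement_prob p f * pick_weight f j.

Lemma pick_probE K (omega : 'I_N -> 'I_K) k f :
  pick_prob R omega f i k = \sum_(j | omega j.1 == k) pick_weight f j.
Proof.
rewrite /pick_prob /pick_weight -/(arrivals f) -mulr_suml.
case: eqP => [-> | _]; first by rewrite invr0 mulr0.
rewrite natr_card_set [in RHS]big_mkcond /=; congr (_ / _); apply: eq_bigr => j _.
by case: (f j == i); case: (omega j.1 == k).
Qed.

Lemma adopt_probE K (omega : 'I_N -> 'I_K) k :
  adopt_prob omega p i k = \sum_(j | omega j.1 == k) pick_chance j.
Proof.
rewrite /adopt_prob; under eq_bigr do rewrite pick_probE mulr_sumr.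
exact: exchange_big.
Qed.

Lemma sum_pick_weight f : \sum_j pick_weight f j = (arrivals f != 0%N)%:R.
Proof.
rewrite -mulr_suml -(natr_card_set _ (fun j => f j == i)) -/(arrivals f).
by case: eqP => [-> | /eqP nz]; rewrite ?invr0 ?mulr0 // divff // pnatr_eq0.
Qed.

Lemma arrivals_eq0E f : ((arrivals f == 0%N)%:R : R) = \prod_j (f j != i)%:R.
Proof.
rewrite /arrivals cards_eq0; have [j fj | none] := pickP (fun j => f j == i).
  rewrite (bigD1 j) //= fj mul0r; case: eqP => // /setP/(_ j).
  by rewrite !inE fj.
rewrite big1 => [|j _]; last by rewrite none.
by case: eqP => // [[]]; apply/setP => j; rewrite !inE none.
Qed.

Hypothesis p_sum1 : forall j, \sum_x p j x = 1.

Lemma sum_placement_prob : \sum_f placement_prob p f = 1.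
Proof.
rewrite /placement_prob -(bigA_distr_bigA (fun j x => p j x)).
by rewrite big1 // => j _; apply: p_sum1.
Qed.

Lemma no_arrival_prob :
  \sum_f placement_prob p f * (arrivals f == 0%N)%:R = \prod_j (1 - p j i).
Proof.
transitivity (\sum_(f : placement) \prod_j (p j (f j) * (f j != i)%:R)).
  by apply: eq_bigr => f _; rewrite arrivals_eq0E -big_split.
rewrite -(bigA_distr_bigA (fun j x => p j x * (x != i)%:R)).
apply: eq_bigr => j _; rewrite -[in RHS](p_sum1 j) (bigD1 i) //= [in RHS](bigD1 i) //=.
rewrite eqxx mulr0 add0r addrAC subrr add0r.
by apply: eq_bigr => x ->; rewrite mulr1.
Qed.

Lemma sum_pick_chance : \sum_j pick_chance j = 1 - \prod_j (1 - p j i).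
Proof.
rewrite /pick_chance exchange_big /=.
under eq_bigr do rewrite -mulr_sumr sum_pick_weight.
rewrite -[X in X - _]sum_placement_prob -no_arrival_prob -sumrB.
apply: eq_bigr => f _.
by case: (arrivals f == 0%N); rewrite /= ?mulr0 ?mulr1 ?subr0 ?subrr.
Qed.

Variables lo hi : R.
Hypothesis lo_ge0 : 0 <= lo.
Hypothesis p_bnd : forall j x, lo <= p j x <= hi.

Let p_ge0 j x : 0 <= p j x.
Proof. by case/andP: (p_bnd j x) => lo_p _; apply: le_trans lo_p. Qed.

Lemma placement_prob_tperm (f : placement) j j' : j != j' ->
  lo ^+ 2 * placement_prob p [ffun x => f (tperm j j' x)] <= hi ^+ 2 * placement_prob p f.
Proof.
move=> neq_jj'; rewrite /placement_prob !(bigD1_2 _ _ neq_jj') !ffunE tpermL tpermR.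
have -> : \prod_(x | (x != j) && (x != j')) p x ([ffun y => f (tperm j j' y)] x) =
          \prod_(x | (x != j) && (x != j')) p x (f x).
  by apply: eq_bigr => x /andP[xj xj']; rewrite ffunE tpermD // eq_sym.
rewrite !mulrA; apply: ler_wpM2r; first exact: prodr_ge0.
have p_le y x : p y x <= hi by case/andP: (p_bnd y x).
have lo_le y x : lo <= p y x by case/andP: (p_bnd y x).
have swapped : p j (f j') * p j' (f j) <= hi ^+ 2 by rewrite expr2 ler_pM.
have kept : lo ^+ 2 <= p j (f j) * p j' (f j') by rewrite expr2 ler_pM.
rewrite -mulrA -[hi ^+ 2 * _ * _]mulrA.
apply: le_trans (ler_wpM2l (exprn_ge0 _ lo_ge0) swapped) _.
by rewrite mulrC; apply: ler_wpM2l kept; exact: exprn_ge0 (le_trans (p_ge0 j i) (p_le j i)).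
Qed.

Lemma pick_chance_ge0 j : 0 <= pick_chance j.
Proof.
apply: sumr_ge0 => f _; apply: mulr_ge0; last exact: divr_ge0.
exact: prodr_ge0.
Qed.

Lemma pick_chance_tperm j j' : lo ^+ 2 * pick_chance j <= hi ^+ 2 * pick_chance j'.
Proof.
have lo_le_hi : lo <= hi by case/andP: (p_bnd j i); apply: le_trans.
have [<- | neq_jj'] := eqVneq j j'.
  apply: ler_wpM2r; first exact: pick_chance_ge0.
  by rewrite lerXn2r // nnegrE //; apply: le_trans lo_le_hi.
pose swap (f : placement) : placement := [ffun x => f (tperm j j' x)].
have swapK : involutive swap by move=> f; apply/ffunP => x; rewrite !ffunE tpermK.
rewrite /pick_chance (reindex_inj (inv_inj swapK)) !mulr_sumr; apply: ler_sum => f _.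
have weight_swap : pick_weight (swap f) j = pick_weight f j'.
  rewrite /pick_weight /arrivals ffunE tpermL -(card_preimset _ (@perm_inj _ (tperm j j'))).
  by congr (_ / _%:R); apply: eq_card => x; rewrite !inE ffunE tpermK.
rewrite weight_swap 2!(mulrA (_ ^+ 2)); apply: ler_wpM2r; last exact: placement_prob_tperm.
exact: divr_ge0.
Qed.

Lemma pick_chance_card_le j :
  lo ^+ 2 * (#|{: tok}|%:R * pick_chance j) <= hi ^+ 2 * (1 - \prod_j (1 - p j i)).
Proof.
have : \sum_(j' : tok) lo ^+ 2 * pick_chance j <= \sum_j' hi ^+ 2 * pick_chance j'.
  by apply: ler_sum => j' _; apply: pick_chance_tperm.
by rewrite sumr_const -mulr_sumr sum_pick_chance mulrCA mulr_natl.
Qed.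

Lemma pick_chance_card_ge j :
  lo ^+ 2 * (1 - \prod_j (1 - p j i)) <= hi ^+ 2 * (#|{: tok}|%:R * pick_chance j).
Proof.
have : \sum_j' lo ^+ 2 * pick_chance j' <= \sum_(j' : tok) hi ^+ 2 * pick_chance j.
  by apply: ler_sum => j' _; apply: pick_chance_tperm.
by rewrite sumr_const -mulr_sumr sum_pick_chance mulrCA mulr_natl.
Qed.

End TokenPicking.

Lemma adopt_prob_no_token (R : realType) (N K : nat) (omega : 'I_N -> 'I_K)
    (p : token N 0 -> 'I_N -> R) (i : 'I_N) (k : 'I_K) :
  adopt_prob omega p i k = 0.
Proof. by rewrite adopt_probE big_pred0 // => -[? []]. Qed.

Lemma sandwich_dist1_le (R : realFieldType) (x d y : R) :
  0 < x <= 1 / 4 -> 0 <= d <= 1 ->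
  (1 - x) ^+ 2 * y <= (1 + x) ^+ 2 * (1 - d) ->
  (1 - x) ^+ 2 * (1 - d) <= (1 + x) ^+ 2 * y ->
  `|y - 1| <= 8 * x + d.
Proof.
move=> /andP[x_gt0 x_le] /andP[d_ge0 d_le1] y_le y_ge.
have xx_ge0 := mulr_ge0 (ltW x_gt0) (ltW x_gt0).
have xxx_ge0 := mulr_ge0 xx_ge0 (ltW x_gt0).
have sq_lo : 0 < (1 - x) ^+ 2 by apply: exprn_gt0; lra.
have sq_hi : 0 < (1 + x) ^+ 2 by apply: exprn_gt0; lra.
have ratio_le : (1 + x) ^+ 2 <= (1 - x) ^+ 2 * (1 + 8 * x) by rewrite !expr2; nra.
have ratio_ge : (1 + x) ^+ 2 * (1 - 8 * x) <= (1 - x) ^+ 2 by rewrite !expr2; nra.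
have y_ub : y <= (1 + 8 * x) * (1 - d).
  rewrite -(ler_pM2l sq_lo) mulrA; apply: le_trans y_le _.
  by apply: ler_wpM2r; lra.
have y_lb : (1 - 8 * x) * (1 - d) <= y.
  rewrite -(ler_pM2l sq_hi) mulrA; apply: le_trans y_ge.
  by apply: ler_wpM2r; lra.
have xd_ge0 : 0 <= x * d by apply: mulr_ge0; lra.
rewrite ler_norml; apply/andP; split; nra.
Qed.

Lemma pick_chance_near_uniform (R : realType) (N T : nat) (p : token N T -> 'I_N -> R)
    (i : 'I_N) (j : token N T) :
  (1 < N)%N -> (forall j, \sum_x p j x = 1) ->
  (forall j x, N%:R^-1 - (N%:R ^+ 3)^-1 <= p j x <= N%:R^-1 + (N%:R ^+ 3)^-1) ->
  `|#|{: token N T}|%:R * pick_chance p i j - 1| <= 8 / N%:R ^+ 2 + \prod_j (1 - p j i).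
Proof.
move=> N_gt1 p_sum1 p_bnd.
have [/andP[u_gt0 u_le] x_bnd] := invn_sqr_bounds R N_gt1.
set u := N%:R^-1 in u_gt0 u_le x_bnd *; set x := u ^+ 2 in x_bnd *.
have p_bnd' j' y : u * (1 - x) <= p j' y <= u * (1 + x) by rewrite -inv_cube_boundsE.
have lo_ge0 : 0 <= u * (1 - x) by apply: mulr_ge0; lra.
have d_bnd : 0 <= \prod_j (1 - p j i) <= 1.
  have q_bnd j' : 0 <= 1 - p j' i <= 1 by case/andP: (p_bnd' j' i); nra.
  by rewrite prodr_ge0 ?prodr_ile1 // => j' _; case/andP: (q_bnd j').
have := pick_chance_card_le i p_sum1 lo_ge0 p_bnd' j.
have := pick_chance_card_ge i p_sum1 lo_ge0 p_bnd' j.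
rewrite !exprMn -![u ^+ 2 * _ * _]mulrA !(ler_pM2l (exprn_gt0 2 u_gt0)) => y_ge y_le.
by rewrite -exprVn -/u -/x; apply: sandwich_dist1_le.
Qed.

Lemma no_arrival_prob_le (R : realType) (N T : nat) (p : token N T -> 'I_N -> R)
    (i : 'I_N) (s : R) :
  (1 < N)%N -> 0 <= s <= T%:R ->
  (forall j x, N%:R^-1 - (N%:R ^+ 3)^-1 <= p j x <= N%:R^-1 + (N%:R ^+ 3)^-1) ->
  \prod_j (1 - p j i) <= 2 / (2 + s).
Proof.
move=> N_gt1 /andP[s_ge0 s_le] p_bnd.
have [/andP[u_gt0 u_le] x_bnd] := invn_sqr_bounds R N_gt1.
set u := N%:R^-1 in u_gt0 u_le x_bnd *; set x := u ^+ 2 in x_bnd *.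
have p_bnd' j y : u * (1 - x) <= p j y <= u * (1 + x) by rewrite -inv_cube_boundsE.
have Nu : N%:R * u = 1 by rewrite mulfV // gt_eqF // ltr0n ltnW.
have lo_bnd : 0 <= u * (1 - x) <= 1 by case/andP: x_bnd => *; apply/andP; split; nra.
have q_bnd j : u * (1 - x) <= p j i <= 1.
  by case/andP: (p_bnd' j i) (x_bnd) => -> /= *; nra.
have := prod1B_mul1D_le1 lo_bnd q_bnd.
have -> : #|{: token N T}|%:R * (u * (1 - x)) = T%:R * (1 - x).
  by rewrite card_prod !card_ord natrM (mulrC N%:R) -mulrA [N%:R * _]mulrA Nu mul1r.
have d_ge0 : 0 <= \prod_j (1 - p j i).
  by apply: prodr_ge0 => j _; case/andP: (q_bnd j); lra.
rewrite ler_pdivlMr; last lra.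
have : 0 <= \prod_j (1 - p j i) * T%:R * (1 - 2 * x).
  by apply: mulr_ge0; [exact: mulr_ge0 | case/andP: x_bnd => *; lra].
have : 0 <= T%:R - s by rewrite subr_ge0.
(* [1 + T (1 - x) >= (2 + T) / 2 >= (2 + s) / 2] as [x <= 1 / 2]. *)
nra.
Qed.

Lemma Qfrac_tokenE (R : realType) (N K T : nat) (omega : 'I_N -> 'I_K) (k : 'I_K) :
  (0 < T)%N ->
  Qfrac R omega k = \sum_(j : token N T | omega j.1 == k) #|{: token N T}|%:R^-1.
Proof.
move=> T_gt0; set c := #|{: token N T}|%:R^-1.
rewrite /Qfrac natr_card_set [in RHS]big_mkcond /= mulr_suml.
rewrite -(pair_bigA _ (fun a b => if omega (a, b).1 == k then c else 0)) /=.
apply: eq_bigr => a _; rewrite sumr_const card_ord /c card_prod !card_ord.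
case: (omega a == k); last by rewrite mul0r mul0rn.
by rewrite natrM invfM mul1r -[_ *+ T]mulr_natr -mulrA mulVf ?mulr1 // pnatr_eq0 -lt0n.
Qed.

Local Open Scope classical_set_scope.

Definition adoption_error (R : realType) (h : R) (n : nat) : R :=
  8 / n%:R ^+ 2 + 2 / (2 + h * ln (n%:R : R)).

Lemma adoption_error_cvg0 (R : realType) (h : R) : 0 < h ->
  adoption_error h n @[n --> \oo] --> 0.
Proof.
move=> h_gt0; apply/cvgr0Pnorm_le => e e_gt0.
near=> n.
have [ge16e [N_gt1 Nexp]] : [/\ 16 / e < n%:R, 1 < (n%:R : R) & expR (4 / (e * h)) < n%:R].
  by apply/and3P; rewrite -!gt_max; near: n; apply: nbhs_infty_gtr.
have n_gt0 : (0 : R) < n%:R by lra.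
have ln_gt0 : 0 < ln (n%:R : R) by apply: ln_gt0.
have hln_gt0 := mulr_gt0 h_gt0 ln_gt0.
have : 4 / (e * h) < ln (n%:R : R).
  by move: Nexp; rewrite -ltr_ln ?posrE ?expR_gt0 // expRK.
rewrite ltr_pdivrMr ?mulr_gt0 // => ln_large.
rewrite ltr_pdivrMr // in ge16e.
have first_le : 8 / (n%:R : R) ^+ 2 <= e / 2.
  rewrite ler_pdivrMr ?exprn_gt0 //.
  have : (n%:R : R) <= n%:R ^+ 2 by rewrite expr2; nra.
  nra.
have second_le : 2 / (2 + h * ln (n%:R : R)) <= e / 2.
  by rewrite ler_pdivrMr; nra.
rewrite /adoption_error ger0_norm; first lra.
by apply: addr_ge0; apply: divr_ge0; rewrite ?exprn_ge0 //; lra.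
Unshelve. all: by end_near.
Qed.

Theorem lemma1 (R : realType) (h : R) (hpos : 0 < h) :
  exists eps : nat -> R,
    eps n @[n --> \oo] --> 0 /\
    forall (N K T : nat),
      (* T = ceil (h log N) tokens emitted per agent *)
      T%:R - 1 < h * ln (N%:R : R) <= T%:R ->
      forall (omega : 'I_N -> 'I_K) (p : token N T -> 'I_N -> R),
        (forall j, \sum_(x : 'I_N) p j x = 1) ->
        (forall j x, N%:R^-1 - (N%:R ^+ 3)^-1 <= p j x <= N%:R^-1 + (N%:R ^+ 3)^-1) ->
        forall (i : 'I_N) (k : 'I_K),
          `| adopt_prob omega p i k - Qfrac R omega k | <= eps N * Qfrac R omega k.
Proof.
exists (adoption_error h); split; first exact: adoption_error_cvg0.
move=> N K T /andP[T_lb T_ub] omega p p_sum1 p_bnd i k.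
have [N_le1 | N_gt1] := leqP N 1.
  have N1 : N = 1%N by apply/eqP; rewrite eqn_leq N_le1 (leq_ltn_trans _ (ltn_ord i)).
  subst N; rewrite ln1 mulr0 in T_lb.
  have : (T%:R : R) < 1%:R by lra.
  rewrite ltr_nat ltnS leqn0 => /eqP T0; subst T.
  have Q_ge0 : 0 <= Qfrac R omega k by apply: divr_ge0.
  rewrite adopt_prob_no_token sub0r normrN ger0_norm // /adoption_error ln1 mulr0 addr0.
  by rewrite -[X in X <= _]mul1r ler_wpM2r //; lra.
have hlnN_gt0 : 0 < h * ln (N%:R : R) by rewrite mulr_gt0 // ln_gt0 // ltr1n.
have T_gt0 : (0 < T)%N by rewrite -(ltr_nat R); apply: lt_le_trans T_ub.
rewrite adopt_probE (Qfrac_tokenE R omega k T_gt0) -sumrB mulr_sumr.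
apply: le_trans (ler_norm_sum _ _ _) _; apply: ler_sum => j _.
set c : R := #|{: token N T}|%:R.
have c_gt0 : 0 < c by rewrite ltr0n card_prod !card_ord muln_gt0 T_gt0 ltnW.
have -> : pick_chance p i j - c^-1 = c^-1 * (c * pick_chance p i j - 1).
  by rewrite mulrBr mulKf ?mulr1 // gt_eqF.
rewrite normrM gtr0_norm ?invr_gt0 // mulrC; apply: ler_wpM2r; first by rewrite invr_ge0 ltW.
apply: le_trans (pick_chance_near_uniform i j N_gt1 p_sum1 p_bnd) _.
by rewrite lerD2l no_arrival_prob_le // ltW.
Qed.
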